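(* Let $\mathfrak g$ be a pre-Lie algebra, $r\in\mathrm{Sym}^2(\mathfrak g)$ an $\mathfrak s$-matrix, and $r^1_t=r+t\kappa_1$, $r^2_t=r+t\kappa_2$ one-parameter infinitesimal deformations of $r$. For $i=1,2$ let $\pi_i(\alpha,\beta)=\mathrm{ad}^*_{\kappa_i^\sharp(\alpha)}\beta-R^*_{\kappa_i^\sharp(\beta)}\alpha$ be the corresponding one-parameter infinitesimal deformations of the phase space $(\mathfrak g^c,\mathfrak g^{*c},\omega_p)$ associated to $r$. If $r^1_t$ and $r^2_t$ are equivalent, then the phase-space deformations generated by $\pi_1$ and $\pi_2$ are equivalent.
   Context: A pre-Lie algebra is a finite-dimensional vector space over a field $\mathbb K$ of characteristic $0$ with product $\cdot$ satisfying $(x\cdot y)\cdot z-x\cdot(y\cdot z)=(y\cdot x)\cdot z-y\cdot(x\cdot z)$; $\mathfrak g^c$ is $\mathfrak g$ with the commutator bracket $[x,y]_{\mathfrak g}$. $L_xy=x\cdot y$, $R_xy=y\cdot x$, $\mathrm{ad}_xy=[x,y]_{\mathfrak g}$, $\langle L^*_x\alpha,y\rangle=-\langle\alpha,x\cdot y\rangle$, $\langle R^*_x\alpha,y\rangle=-\langle\alpha,y\cdot x\rangle$, $\mathrm{ad}^*_x=L^*_x-R^*_x$. For $r\in\mathrm{Sym}^2(\mathfrak g)$, $\langle r^\sharp(\alpha),\beta\rangle=r(\alpha,\beta)$; for $r=\sum_ia_i\otimes b_i$, $[r,r]=-\sum a_i\cdot a_j\otimes b_i\otimes b_j+\sum a_i\otimes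 b_i\cdot a_j\otimes b_j+\sum a_i\otimes a_j\otimes[b_i,b_j]_{\mathfrak g}$; $r$ is an $\mathfrak s$-matrix if $[r,r]=0$; $\alpha\cdot_r\beta=\mathrm{ad}^*_{r^\sharp(\alpha)}\beta-R^*_{r^\sharp(\beta)}\alpha$. A one-parameter infinitesimal deformation of $r$ is $r+t\kappa$, $\kappa\in\mathrm{Sym}^2(\mathfrak g)$, an $\mathfrak s$-matrix for all $t\in\mathbb K$. $\tilde{\mathcal C}^1_{\mathfrak s}(\mathfrak g)=\{x\in\mathfrak g:(R_x\otimes\mathrm{Id}+\mathrm{Id}\otimes R_x)r=0\}$. A weak homomorphism from $\mathfrak s$-matrix $r_2$ to $r_1$ is a pair $(\phi,\varphi)$, $\phi:\mathfrak g^c\to\mathfrak g^c$ a Lie algebra homomorphism, $\varphi$ linear, with $(\varphi\otimes\mathrm{Id})r_1=(\mathrm{Id}\otimes\phi)r_2$ and $\varphi(\phi(x)\cdot y)=x\cdot\varphi(y)$. Deformations $r^1_t,r^2_t$ are equivalent if there is $x\in\tilde{\mathcal C}^1_{\mathfrak s}(\mathfrak g)$ with $(\mathrm{Id}+t\,\mathrm{ad}_x,\mathrm{Id}-tL_x)$ a weak homomorphism from $r^2_t$ to $r^1_t$ for every $t$. For a pre-Lie product $\ast$ on $\mathfrak g^*$ let $[x+\alpha,y+\beta]_{p,\ast}=(\alpha\ast\beta-\beta\ast\alpha)+L^*_x\beta-L^*_y\alpha+L^*_\alpha y-L^*_\beta x+[x,y]_{\mathfrak g}$ on $\mathfrak g\oplus\mathfrak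 g^*$, where $\langle L^*_\alpha x,\beta\rangle=-\langle x,\alpha\ast\beta\rangle$; this is a phase space of $\mathfrak g^c$ if it is a Lie bracket and $\omega_p(x+\alpha,y+\beta)=\langle\alpha,y\rangle-\langle x,\beta\rangle$ is a $2$-cocycle. $\pi$ generates a one-parameter infinitesimal deformation of the phase space associated to $r$ if for all $t$, $\ast_t=\cdot_r+t\pi$ is a pre-Lie product giving a phase space. A weak homomorphism from the phase space defined by $\ast$ to the one defined by $\ast'$ is a pair $(\phi,\varphi)$ with $\phi:\mathfrak g^c\to\mathfrak g^c$ a Lie algebra homomorphism and $\varphi:\mathfrak g\to\mathfrak g$ linear such that $\varphi^*$ is a Lie algebra homomorphism from $(\mathfrak g^*,[\cdot,\cdot]_\ast)$ to $(\mathfrak g^*,[\cdot,\cdot]_{\ast'})$ and $\phi+\varphi^*$ is a Lie algebra homomorphism from $(\mathfrak g\oplus\mathfrak g^*,[\cdot,\cdot]_{p,\ast})$ to $(\mathfrak g\oplus\mathfrak g^*,[\cdot,\cdot]_{p,\ast'})$. Two phase-space deformations generated by $\pi_1,\pi_2$ are equivalent if there is $x\in\mathfrak g$ such that for all $t$, $(\mathrm{Id}+t\,\mathrm{ad}_x,\mathrm{Id}-tL_x)$ is a weak homomorphism from the phase space defined by $\cdot_r+t\pi_2$ to that defined by $\cdot_r+t\pi_1$. *)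

(* Coordinate model of a finite-dimensional pre-Lie algebra
   g = F^n (row vectors 'rV[F]_n), its dual g^* = F^n with the standard pairing,
   Sym^2(g) = sym_tensor n x n matrices, and 2-/3-tensors as coefficient arrays. *)
From HB Require Import structures.
From mathcomp Require Import all_boot all_order all_algebra.
Set Implicit Arguments. Unset Strict Implicit. Unset Printing Implicit Defensive.
Import Order.TTheory GRing.Theory Num.Theory.
Local Open Scope ring_scope.

Section Defs.
Variables (F : fieldType) (n : nat).

Definition vec := 'rV[F]_n.

(* structure constants: e_i . e_j = \sum_k c i j k e_k *)
Definition sconst := 'I_n -> 'I_n -> 'I_n -> F.

Definition prod (c : sconst) (x y : vec) : vec :=
  \row_k \sum_i \sum_j x 0 i * y 0 j * c i j k.

Definition preLie (c : sconst) : Prop :=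
  forall x y z : vec,
    prod c (prod c x y) z - prod c x (prod c y z)
    = prod c (prod c y x) z - prod c y (prod c x z).

Definition brg (c : sconst) (x y : vec) : vec := prod c x y - prod c y x.

Definition evec (j : 'I_n) : vec := \row_k (k == j)%:R.

Definition pairing (alpha x : vec) : F := \sum_i alpha 0 i * x 0 i.

(* <L^*_x alpha, y> = - <alpha, x . y> *)
Definition Lstar (c : sconst) (x alpha : vec) : vec :=
  \row_j - pairing alpha (prod c x (evec j)).
(* <R^*_x alpha, y> = - <alpha, y . x> *)
Definition Rstar (c : sconst) (x alpha : vec) : vec :=
  \row_j - pairing alpha (prod c (evec j) x).
Definition adstar (c : sconst) (x alpha : vec) : vec :=
  Lstar c x alpha - Rstar c x alpha.

(* r = \sum_{k,l} r k l e_k (x) e_l ;  <r^#(alpha), beta> = r(alpha, beta) *)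
Definition sharp (r : 'M[F]_n) (alpha : vec) : vec := alpha *m r.

Definition sym_tensor (r : 'M[F]_n) : Prop := r^T = r.

Definition tensor2 (a b : vec) : 'M[F]_n := a^T *m b.
Definition tensor3 (a b d : vec) : {ffun 'I_n * 'I_n * 'I_n -> F} :=
  [ffun pqs => a 0 pqs.1.1 * b 0 pqs.1.2 * d 0 pqs.2].

Definition rr (c : sconst) (r : 'M[F]_n) : {ffun 'I_n * 'I_n * 'I_n -> F} :=
  [ffun pqs => \sum_k \sum_l \sum_k' \sum_l' r k l * r k' l' *
    (- tensor3 (prod c (evec k) (evec k')) (evec l) (evec l') pqs
     + tensor3 (evec k) (prod c (evec l) (evec k')) (evec l') pqs
     + tensor3 (evec k) (evec k') (brg c (evec l) (evec l')) pqs)].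

Definition smatrix (c : sconst) (r : 'M[F]_n) : Prop := rr c r = 0.

Definition inf_deformation (c : sconst) (r kappa : 'M[F]_n) : Prop :=
  sym_tensor kappa /\ forall t : F, smatrix c (r + t *: kappa).

Definition C1 (c : sconst) (r : 'M[F]_n) (x : vec) : Prop :=
  \sum_k \sum_l r k l *: (tensor2 (prod c (evec k) x) (evec l)
                          + tensor2 (evec k) (prod c (evec l) x)) = 0.

Definition linearP (f : vec -> vec) : Prop :=
  forall (a : F) (u v : vec), f (a *: u + v) = a *: f u + f v.

Definition lie_hom_g (c : sconst) (f : vec -> vec) : Prop :=
  linearP f /\ forall x y, f (brg c x y) = brg c (f x) (f y).

Definition weak_hom_s (c : sconst) (r2 r1 : 'M[F]_n)
    (phi varphi : vec -> vec) : Prop :=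
  [/\ lie_hom_g c phi, linearP varphi,
      \sum_k \sum_l r1 k l *: tensor2 (varphi (evec k)) (evec l)
      = \sum_k \sum_l r2 k l *: tensor2 (evec k) (phi (evec l))
    & forall x y, varphi (prod c (phi x) y) = prod c x (varphi y)].

Definition Lop (c : sconst) (x : vec) : vec -> vec := fun y => prod c x y.
Definition adop (c : sconst) (x : vec) : vec -> vec := fun y => brg c x y.

Definition deform_equiv (c : sconst) (r kappa1 kappa2 : 'M[F]_n) : Prop :=
  exists x : vec, C1 c r x /\
    forall t : F,
      weak_hom_s c (r + t *: kappa2) (r + t *: kappa1)
        (fun y => y + t *: adop c x y) (fun y => y - t *: Lop c x y).

Definition dprod := vec -> vec -> vec.  (* a product on g^* *)

Definition dot_r (c : sconst) (r : 'M[F]_n) : dprod :=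
  fun alpha beta => adstar c (sharp r alpha) beta - Rstar c (sharp r beta) alpha.

Definition pi_kappa (c : sconst) (kappa : 'M[F]_n) : dprod := dot_r c kappa.

(* <L^*_alpha x, beta> = - <x, alpha * beta>  (L^*_alpha x in g) *)
Definition LstarD (P : dprod) (alpha x : vec) : vec :=
  \row_j - pairing (P alpha (evec j)) x.

Definition brD (P : dprod) (alpha beta : vec) : vec := P alpha beta - P beta alpha.

(* elements of g (+) g^* as pairs (x, alpha) *)
Definition brp (c : sconst) (P : dprod) (u v : vec * vec) : vec * vec :=
  let: (x, alpha) := u in let: (y, beta) := v in
  (LstarD P alpha y - LstarD P beta x + brg c x y,
   brD P alpha beta + Lstar c x beta - Lstar c y alpha).

Definition omega_p (u v : vec * vec) : F :=
  pairing u.2 v.1 - pairing v.2 u.1.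

Definition addp (u v : vec * vec) : vec * vec := (u.1 + v.1, u.2 + v.2).
Definition scalep (a : F) (u : vec * vec) : vec * vec := (a *: u.1, a *: u.2).

Definition bilinear_dprod (P : dprod) : Prop :=
  (forall a b1 b2 beta, P (a *: b1 + b2) beta = a *: P b1 beta + P b2 beta) /\
  (forall a alpha b1 b2, P alpha (a *: b1 + b2) = a *: P alpha b1 + P alpha b2).

Definition preLieD (P : dprod) : Prop :=
  bilinear_dprod P /\
  forall x y z, P (P x y) z - P x (P y z) = P (P y x) z - P y (P x z).

Definition lie_bracket_p (B : vec * vec -> vec * vec -> vec * vec) : Prop :=
  [/\ (forall a u1 u2 v, B (addp (scalep a u1) u2) v = addp (scalep a (B u1 v)) (B u2 v)),
      (forall a u v1 v2, B u (addp (scalep a v1) v2) = addp (scalep a (B u v1)) (B u v2)),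
      (forall u, B u u = (0, 0))
    & (forall u v w, addp (B u (B v w)) (addp (B v (B w u)) (B w (B u v))) = (0, 0))].

Definition phase_space (c : sconst) (P : dprod) : Prop :=
  lie_bracket_p (brp c P) /\
  forall u v w, omega_p (brp c P u v) w + omega_p (brp c P v w) u
                + omega_p (brp c P w u) v = 0.

Definition phase_deformation (c : sconst) (r : 'M[F]_n) (pi : dprod) : Prop :=
  forall t : F, preLieD (fun a b => dot_r c r a b + t *: pi a b)
             /\ phase_space c (fun a b => dot_r c r a b + t *: pi a b).

(* varphi^* : <varphi^* alpha, x> = <alpha, varphi x> *)
Definition dualmap (varphi : vec -> vec) (alpha : vec) : vec :=
  \row_j pairing alpha (varphi (evec j)).

Definition lie_hom_D (P P' : dprod) (f : vec -> vec) : Prop :=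
  linearP f /\ forall a b, f (brD P a b) = brD P' (f a) (f b).

Definition lie_hom_p (c : sconst) (P P' : dprod) (f : vec * vec -> vec * vec) : Prop :=
  (forall a u v, f (addp (scalep a u) v) = addp (scalep a (f u)) (f v)) /\
  forall u v, f (brp c P u v) = brp c P' (f u) (f v).

Definition weak_hom_p (c : sconst) (P P' : dprod) (phi varphi : vec -> vec) : Prop :=
  [/\ lie_hom_g c phi, linearP varphi,
      lie_hom_D P P' (dualmap varphi)
    & lie_hom_p c P P' (fun u => (phi u.1, dualmap varphi u.2))].

Definition phase_equiv (c : sconst) (r : 'M[F]_n) (pi1 pi2 : dprod) : Prop :=
  exists x : vec, forall t : F,
    weak_hom_p c (fun a b => dot_r c r a b + t *: pi2 a b)
                 (fun a b => dot_r c r a b + t *: pi1 a b)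
                 (fun y => y + t *: adop c x y) (fun y => y - t *: Lop c x y).

End Defs.

From Pilot Require Import Defs.
From HB Require Import structures.
From mathcomp Require Import all_boot all_order all_algebra.
From mathcomp Require Import ring.
Import Order.TTheory GRing.Theory Num.Theory.
Local Open Scope ring_scope.
Set Implicit Arguments. Unset Strict Implicit.

(* For each t, the equivalence of the s-matrix deformations provides a weak
   homomorphism (Id + t ad_x, Id - t L_x) from r + t kappa2 to r + t kappa1, and
   since alpha ._r beta is linear in r, the phase space of the deformation pi_i at
   t is the one defined by ._(r + t kappa_i).  So it suffices that a weak
   homomorphism (phi, varphi) between symmetric tensors r2, r1 is a weak
   homomorphism between the phase spaces of ._r2 and ._r1.  In matrix form the
   tensor condition reads varphi^T r1 = r2 phi, i.e. r1^# varphi^* = phi r2^#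
   and, by symmetry, varphi r1^# = r2^# phi^*; together with
   varphi (phi x . y) = x . varphi y these intertwine every term of the bracket,
   as one checks by pairing with test vectors. *)

Section Pairing.
Variables (F : fieldType) (n : nat).
Implicit Types (u v w y : vec F n) (f : vec F n -> vec F n).

Lemma pairing_is_bilinear : bilinear_for *%R *%R (@pairing F n).
Proof.
by split=> w a u v /=; rewrite /pairing mulr_sumr -big_split;
  apply: eq_bigr => i _; rewrite !mxE /=; ring.
Qed.

HB.instance Definition _ := bilinear_isBilinear.Build F (vec F n) (vec F n) F
  *%R *%R (@pairing F n) pairing_is_bilinear.

Lemma pairingC u v : pairing u v = pairing v u.
Proof. by apply: eq_bigr => i _; rewrite mulrC. Qed.

Lemma evec_delta j : evec F j = delta_mx 0 j :> 'rV_n.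
Proof. by apply/rowP => k; rewrite !mxE. Qed.

Lemma pairing_evec u j : pairing u (evec F j) = u 0 j.
Proof.
rewrite /pairing (bigD1 j) //= big1 ?addr0 => [|i /negbTE neq_ij].
  by rewrite mxE eqxx mulr1.
by rewrite mxE neq_ij mulr0.
Qed.

Lemma pairing_inj u v : (forall y, pairing u y = pairing v y) -> u = v.
Proof. by move=> eq_uv; apply/rowP => j; rewrite -!pairing_evec. Qed.

Lemma linear_rowE (V : lmodType F) (g : vec F n -> V) :
  (forall a u v, g (a *: u + v) = a *: g u + g v) ->
  forall y, g y = \sum_j y 0 j *: g (evec F j).
Proof.
move=> linP_g y.
have g0 : g 0 = 0.
  by apply: (addrI (g 0)); rewrite addr0 -{1}(scale1r (g 0)) -linP_g scaler0 addr0.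
have gD : {morph g : u v / u + v} by move=> u v; have := linP_g 1 u v; rewrite !scale1r.
rewrite [y in LHS]matrix_sum_delta big_ord1 (big_morph g gD g0).
by apply: eq_bigr => j _; rewrite -[_ *: _]addr0 linP_g g0 addr0 evec_delta.
Qed.

(* [Lstar], [Rstar], [LstarD] and [dualmap] are all of the form
   [\row_j l (evec F j)] for a linear form [l]. *)
Lemma pairing_row_form (l : vec F n -> F) :
  (forall a u v, l (a *: u + v) = a * l u + l v) ->
  forall y, pairing (\row_j l (evec F j)) y = l y.
Proof.
move=> linP_l y; rewrite (linear_rowE (V := F^o) (g := l) linP_l y).
by apply: eq_bigr => j _; rewrite mxE mulrC.
Qed.

Lemma mul_rV_lin1P f : Defs.linearP f -> forall y, y *m lin1_mx f = f y.
Proof.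
move=> linP_f y; apply/rowP => k; rewrite (linear_rowE linP_f y) summxE !mxE.
by apply: eq_bigr => j _; rewrite !mxE evec_delta.
Qed.

Lemma linearPD f : Defs.linearP f -> {morph f : u v / u + v}.
Proof. by move=> linP_f u v; rewrite -!(mul_rV_lin1P linP_f) mulmxDl. Qed.

Lemma linearPB f : Defs.linearP f -> {morph f : u v / u - v}.
Proof. by move=> linP_f u v; rewrite -!(mul_rV_lin1P linP_f) mulmxBl. Qed.

Lemma dualmapE f al : dualmap f al = al *m (lin1_mx f)^T.
Proof.
by apply/rowP => j; rewrite !mxE; apply: eq_bigr => i _; rewrite !mxE evec_delta.
Qed.

Lemma dualmap_pairing f al y :
  Defs.linearP f -> pairing (dualmap f al) y = pairing al (f y).
Proof.
move=> linP_f; apply: (pairing_row_form (l := fun y => pairing al (f y))).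
by move=> a u v /=; rewrite linP_f linearPr.
Qed.

Lemma tensor2E (a b : vec F n) p q : tensor2 a b p q = a 0 p * b 0 q.
Proof. by rewrite !mxE big_ord1 !mxE. Qed.

Lemma sum_tensor2_evecr (r : 'M[F]_n) f :
  \sum_k \sum_l r k l *: tensor2 (f (evec F k)) (evec F l) = (lin1_mx f)^T *m r.
Proof.
apply/matrixP => p q; rewrite summxE !mxE; apply: eq_bigr => k _.
rewrite summxE (bigD1 q) //= big1 ?addr0 => [|l /negbTE neq_lq].
  by rewrite mxE tensor2E !mxE eqxx -evec_delta mulr1 mulrC.
by rewrite mxE tensor2E !mxE eq_sym neq_lq !mulr0.
Qed.

Lemma sum_tensor2_evecl (r : 'M[F]_n) f :
  \sum_k \sum_l r k l *: tensor2 (evec F k) (f (evec F l)) = r *m lin1_mx f.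
Proof.
apply/matrixP => p q; rewrite summxE; under eq_bigr => k _ do rewrite summxE.
rewrite exchange_big mxE /=; apply: eq_bigr => l _.
rewrite (bigD1 p) //= big1 ?addr0 => [|k /negbTE neq_kp].
  by rewrite mxE tensor2E !mxE eqxx -evec_delta mul1r.
by rewrite mxE tensor2E !mxE eq_sym neq_kp mul0r mulr0.
Qed.

End Pairing.

Section Coadjoint.
Variables (F : fieldType) (n : nat) (c : sconst F n).
Implicit Types (r k : 'M[F]_n) (x y al be : vec F n).

Lemma prod_is_bilinear : bilinear_for *:%R *:%R (prod c).
Proof.
by split=> w a u v /=; apply/rowP => k; rewrite !mxE mulr_sumr -big_split;
  apply: eq_bigr => i _; rewrite mulr_sumr -big_split;
  apply: eq_bigr => j _; rewrite !mxE /=; ring.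
Qed.

HB.instance Definition _ := bilinear_isBilinear.Build F (vec F n) (vec F n) (vec F n)
  *:%R *:%R (prod c) prod_is_bilinear.

Lemma Lstar_pairing x al y : pairing (Lstar c x al) y = - pairing al (prod c x y).
Proof.
apply: (pairing_row_form (l := fun y => - pairing al (prod c x y))) => a u v /=.
by rewrite !linearPr /=; ring.
Qed.

Lemma Rstar_pairing x al y : pairing (Rstar c x al) y = - pairing al (prod c y x).
Proof.
apply: (pairing_row_form (l := fun y => - pairing al (prod c y x))) => a u v /=.
by rewrite linearPl linearPr /=; ring.
Qed.

Lemma dot_r_pairing r al be y :
  pairing (dot_r c r al be) y
  = - pairing be (brg c (sharp r al) y) + pairing al (prod c y (sharp r be)).
Proof.
rewrite /dot_r /adstar /brg !linearBl /= Lstar_pairing !Rstar_pairing.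
by rewrite linearBr /=; ring.
Qed.

Lemma brD_dot_r_pairing r al be y :
  pairing (brD (dot_r c r) al be) y
  = - pairing be (prod c (sharp r al) y) + pairing al (prod c (sharp r be) y).
Proof. by rewrite /brD linearBl /= !dot_r_pairing /brg !linearBr /=; ring. Qed.

Lemma dot_r_linearr r al a be1 be2 :
  dot_r c r al (a *: be1 + be2) = a *: dot_r c r al be1 + dot_r c r al be2.
Proof.
apply: pairing_inj => y.
rewrite linearPl /= !dot_r_pairing /sharp mulmxDl -scalemxAl.
by rewrite !linearPl !linearPr /=; ring.
Qed.

Lemma LstarD_dot_r_pairing r al x be :
  pairing (LstarD (dot_r c r) al x) be = - pairing (dot_r c r al be) x.
Proof.
apply: (pairing_row_form (l := fun be => - pairing (dot_r c r al be) x)) => a u v /=.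
by rewrite dot_r_linearr linearPl /=; ring.
Qed.

Lemma dot_r_deformation r k t al be :
  dot_r c (r + t *: k) al be = dot_r c r al be + t *: dot_r c k al be.
Proof.
apply: pairing_inj => y.
rewrite dot_r_pairing [RHS]linearDl /= linearZl /= !dot_r_pairing.
rewrite /sharp /brg mulmxDr -!scalemxAr.
by rewrite !linearBr !linearDl !linearDr !linearZl !linearZr /=; ring.
Qed.

End Coadjoint.

Lemma brp_eq (F : fieldType) (n : nat) (c : sconst F n) (P P' : dprod F n) :
  P =2 P' -> brp c P =2 brp c P'.
Proof.
move=> eqP [x al] [y be].
have eqL : LstarD P =2 LstarD P'.
  by move=> be' x'; apply/rowP => j; rewrite !mxE eqP.
by rewrite /brp !eqL /brD !eqP.
Qed.

Lemma weak_hom_p_eq (F : fieldType) (n : nat) (c : sconst F n)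
    (P1 P1' P2 P2' : dprod F n) (ph vph : vec F n -> vec F n) :
  weak_hom_p c P2 P1 ph vph -> P1 =2 P1' -> P2 =2 P2' -> weak_hom_p c P2' P1' ph vph.
Proof.
move=> [ph_lie vph_lin [dual_lin dual_brD] [pair_lin pair_brp]] eqP1 eqP2.
split=> //; split=> //.
  by move=> al be; rewrite /brD -!eqP1 -!eqP2; exact: dual_brD.
by move=> u v; rewrite -(brp_eq c eqP1) -(brp_eq c eqP2); exact: pair_brp.
Qed.

Section WeakHomomorphism.
Variables (F : fieldType) (n : nat) (c : sconst F n) (r1 r2 : 'M[F]_n).
Variables (ph vph : vec F n -> vec F n).
Hypotheses (r1_sym : sym_tensor r1) (r2_sym : sym_tensor r2).
Hypotheses (ph_lie : lie_hom_g c ph) (vph_lin : Defs.linearP vph).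
Hypothesis r_tensor :
  \sum_k \sum_l r1 k l *: tensor2 (vph (evec F k)) (evec F l)
  = \sum_k \sum_l r2 k l *: tensor2 (evec F k) (ph (evec F l)).
Hypothesis vph_prod : forall x y, vph (prod c (ph x) y) = prod c x (vph y).

Let ph_lin : Defs.linearP ph := ph_lie.1.

Lemma lin1_mx_tensor : (lin1_mx vph)^T *m r1 = r2 *m lin1_mx ph.
Proof. by rewrite -sum_tensor2_evecr -sum_tensor2_evecl. Qed.

Lemma sharp_dualmap al : sharp r1 (dualmap vph al) = ph (sharp r2 al).
Proof. by rewrite /sharp dualmapE -mulmxA lin1_mx_tensor mulmxA mul_rV_lin1P. Qed.

Lemma vph_sharp be : vph (sharp r1 be) = sharp r2 (dualmap ph be).
Proof.
have := congr1 trmx lin1_mx_tensor; rewrite !trmx_mul trmxK r1_sym r2_sym => tensorT.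
by rewrite /sharp dualmapE -(mul_rV_lin1P vph_lin) -mulmxA tensorT mulmxA.
Qed.

Lemma dualmap_Lstar x be :
  dualmap vph (Lstar c x be) = Lstar c (ph x) (dualmap vph be).
Proof.
apply: pairing_inj => y.
by rewrite !dualmap_pairing // !Lstar_pairing dualmap_pairing // vph_prod.
Qed.

Lemma dualmap_brD al be :
  dualmap vph (brD (dot_r c r2) al be)
  = brD (dot_r c r1) (dualmap vph al) (dualmap vph be).
Proof.
apply: pairing_inj => y.
rewrite dualmap_pairing // !brD_dot_r_pairing !sharp_dualmap.
by rewrite !dualmap_pairing // !vph_prod.
Qed.

Lemma ph_LstarD al y :
  ph (LstarD (dot_r c r2) al y) = LstarD (dot_r c r1) (dualmap vph al) (ph y).
Proof.
apply: pairing_inj => be.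
rewrite pairingC -dualmap_pairing // pairingC !LstarD_dot_r_pairing !dot_r_pairing.
by rewrite sharp_dualmap -ph_lie.2 !dualmap_pairing // vph_prod vph_sharp.
Qed.

Lemma weak_hom_p_dot_r : weak_hom_p c (dot_r c r2) (dot_r c r1) ph vph.
Proof.
have dual_lin : Defs.linearP (dualmap vph).
  by move=> a u v; rewrite !dualmapE mulmxDl -scalemxAl.
split=> //; first by split; last exact: dualmap_brD.
split=> [a [x al] [y be] | [x al] [y be]].
  by rewrite /addp /scalep /= ph_lin dual_lin.
rewrite /brp /=; congr pair.
  by rewrite linearPD // linearPB // !ph_LstarD ph_lie.2.
by rewrite linearPB // linearPD // dualmap_brD !dualmap_Lstar.
Qed.

End WeakHomomorphism.

Lemma weak_hom_s_phase (F : fieldType) (n : nat) (c : sconst F n)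
    (r1 r2 : 'M[F]_n) (ph vph : vec F n -> vec F n) :
  sym_tensor r1 -> sym_tensor r2 -> weak_hom_s c r2 r1 ph vph ->
  weak_hom_p c (dot_r c r2) (dot_r c r1) ph vph.
Proof.
by move=> r1_sym r2_sym [ph_lie vph_lin r_tensor vph_prod]; exact: weak_hom_p_dot_r.
Qed.

Theorem proposition5p10 (F : fieldType) (n : nat) (c : sconst F n)
    (r kappa1 kappa2 : 'M[F]_n) :
  [pchar F] =i pred0 ->
  preLie c ->
  sym_tensor r -> smatrix c r ->
  inf_deformation c r kappa1 -> inf_deformation c r kappa2 ->
  deform_equiv c r kappa1 kappa2 ->
  phase_equiv c r (pi_kappa c kappa1) (pi_kappa c kappa2).
Proof.
move=> _ _ r_sym _ [kappa1_sym _] [kappa2_sym _] [x [_ equiv_x]]; exists x => t.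
have deform_sym kappa : sym_tensor kappa -> sym_tensor (r + t *: kappa).
  by move=> kappa_sym; rewrite /sym_tensor linearD linearZ /= r_sym kappa_sym.
have := weak_hom_s_phase (deform_sym _ kappa1_sym) (deform_sym _ kappa2_sym)
  (equiv_x t).
by move/weak_hom_p_eq; apply=> al be; exact: dot_r_deformation.
Qed.
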